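(* The composition $\mathcal F\circ\mathcal I$ is the identity map on $\mathcal F_\mathbb Z$.
   Context: Let $S_\mathbb Z$ be the group of finitely supported permutations of $\mathbb Z$. Let $\mathcal I_\mathbb Z=\{w\in S_\mathbb Z:w=w^{-1}\}$. Let $\Theta(i)=i-(-1)^i$ and $\mathcal F_\mathbb Z=\{w^{-1}\Theta w:w\in S_\mathbb Z\}$. For $y\in\mathcal I_\mathbb Z$, choose any even integer $m$ smaller than every element of $\mathrm{supp}(y)=\{i:y(i)\ne i\}$. Let $\phi:\mathbb Z\to\mathbb Z\setminus\mathrm{supp}(y)$ be the order-preserving bijection with $\phi(0)=m$. Define $\mathcal F(y)$ to be the unique element of $\mathcal F_\mathbb Z$ with $\mathcal F(y)(i)=y(i)$ for $i\in\mathrm{supp}(y)$ and $\mathcal F(y)\circ\phi=\phi\circ\Theta$. For $z\in\mathcal F_\mathbb Z$, let $\mathcal I(z)\in\mathcal I_\mathbb Z$ be the involution whose nontrivial cycles are exactly the cycles $(p,q)$ of $z$ with $p<q$ for which some cycle $(a,b)$ of $z$ with $a<b$ satisfies $p<b<q$. *)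

From Stdlib Require Import ZArith List.
Import ListNotations.
Open Scope Z_scope.

Definition fin_supp (w : Z -> Z) : Prop :=
  exists N : Z, forall i, N < Z.abs i -> w i = i.

Definition inverse_of (w winv : Z -> Z) : Prop :=
  (forall i, winv (w i) = i) /\ (forall i, w (winv i) = i).

Definition in_S_Z (w : Z -> Z) : Prop :=
  (exists winv, inverse_of w winv) /\ fin_supp w.

Definition in_I_Z (y : Z -> Z) : Prop :=
  in_S_Z y /\ forall i, y (y i) = i.

(* Theta(i) = i - (-1)^i *)
Definition Theta (i : Z) : Z := if Z.even i then i - 1 else i + 1.

Definition in_F_Z (z : Z -> Z) : Prop :=
  exists w winv, in_S_Z w /\ inverse_of w winv /\
    forall i, z i = winv (Theta (w i)).

(* b ranges over p+1, ..., q-1; test whether some b has z b < b,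
   i.e. (z b, b) is a cycle (a,b) of z with a < b and p < b < q *)
Definition crossing (z : Z -> Z) (p q : Z) : bool :=
  existsb (fun k => let b := p + 1 + Z.of_nat k in Z.ltb (z b) b)
          (seq 0 (Z.to_nat (q - p - 1))).

(* The map I : F_Z -> I_Z.  The point i lies in the cycle (p,q) of z with
   p = min(i, z i), q = max(i, z i); it is kept iff that cycle satisfies
   the condition, otherwise i is fixed. *)
Definition I_map (z : Z -> Z) (i : Z) : Z :=
  if crossing z (Z.min i (z i)) (Z.max i (z i)) then z i else i.

(* Admissible data (m, phi) in the definition of F(y):
   m even, smaller than every element of supp(y);
   phi : Z -> Z \ supp(y) an order-preserving bijection with phi 0 = m. *)
Definition F_data (y : Z -> Z) (m : Z) (phi : Z -> Z) : Prop :=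
  Z.even m = true /\
  (forall i, y i <> i -> m < i) /\
  (forall i j, i < j -> phi i < phi j) /\
  (forall i, y (phi i) = phi i) /\
  (forall j, y j = j -> exists i, phi i = j) /\
  phi 0 = m.

Definition F_spec (y : Z -> Z) (phi : Z -> Z) (z : Z -> Z) : Prop :=
  in_F_Z z /\
  (forall i, y i <> i -> z i = y i) /\
  (forall i, z (phi i) = phi (Theta i)).

(* The fixed points of I(z) are exactly the points lying on cycles (p,q) of
   z that no other cycle crosses from below.  Such a cycle encloses only
   points moved by I(z): the cycle through a point c strictly inside either
   stays inside, which is impossible when nothing inside points downward,
   or leaves, and then it is crossed by (p,q).  Hence z swaps consecutive
   fixed points of I(z): in the enumeration phi, z (phi i) = phi (i - 1) or
   phi (i + 1).  Such a pairing of neighbours is determined by one pair,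
   and far below supp(I(z)) the map z is Theta while phi is a shift by the
   even integer m, so the pairing is Theta.  Uniqueness is clear because
   supp(I(z)) and the image of phi cover Z. *)

From Stdlib Require Import ZArith Lia List FunctionalExtensionality.
Open Scope Z_scope.

Lemma Theta_neighbour i : Theta i = i - 1 \/ Theta i = i + 1.
Proof. unfold Theta; destruct (Z.even i); lia. Qed.

Lemma Theta_involutive i : Theta (Theta i) = i.
Proof.
  unfold Theta at 2; destruct (Z.even i) eqn:E; unfold Theta.
  - rewrite Z.even_sub, E; simpl; lia.
  - rewrite Z.even_add, E; simpl; lia.
Qed.

Lemma Theta_add_even m i : Z.even m = true -> Theta (m + i) = m + Theta i.
Proof. intros Hm; unfold Theta; rewrite Z.even_add, Hm; destruct (Z.even i); simpl; lia. Qed.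

Lemma F_Z_involutive z : in_F_Z z -> forall i, z (z i) = i.
Proof.
  intros (w & winv & _ & [Hww Hw] & Hz) i.
  rewrite (Hz (z i)), (Hz i), Hw, Theta_involutive, Hww; reflexivity.
Qed.

Lemma F_Z_no_fixpoint z : in_F_Z z -> forall i, z i <> i.
Proof.
  intros (w & winv & _ & [_ Hw] & Hz) i E; rewrite Hz in E.
  apply (f_equal w) in E; rewrite Hw in E.
  destruct (Theta_neighbour (w i)); lia.
Qed.

Lemma F_Z_eventually_Theta z :
  in_F_Z z -> exists N, forall i, N < Z.abs i -> z i = Theta i.
Proof.
  intros (w & winv & (_ & N & HN) & [Hww _] & Hz).
  exists (N + 1); intros i Hi.
  assert (Hfar : forall j, N < Z.abs j -> winv j = j)
    by (intros j Hj; rewrite <- (HN j Hj) at 1; apply Hww).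
  rewrite Hz, HN by lia; apply Hfar.
  destruct (Theta_neighbour i); lia.
Qed.

Lemma crossing_spec z p q :
  crossing z p q = true <-> exists b, p < b < q /\ z b < b.
Proof.
  unfold crossing; rewrite existsb_exists; split.
  - intros (k & Hk & Hb); apply in_seq in Hk; apply Z.ltb_lt in Hb.
    exists (p + 1 + Z.of_nat k); split; [lia | exact Hb].
  - intros (b & Hb & Hzb); exists (Z.to_nat (b - p - 1)); split.
    + apply in_seq; lia.
    + rewrite Z2Nat.id by lia; replace (p + 1 + (b - p - 1)) with b by ring.
      apply Z.ltb_lt; exact Hzb.
Qed.

Lemma I_map_moved z i : I_map z i <> i -> I_map z i = z i.
Proof. unfold I_map; destruct crossing; congruence. Qed.

Section Noncrossing.

Variable z : Z -> Z.
Hypothesis z_involutive : forall i, z (z i) = i.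
Hypothesis z_no_fixpoint : forall i, z i <> i.

Lemma I_map_fixed_noncrossing f : I_map z f = f ->
  forall b, Z.min f (z f) < b < Z.max f (z f) -> b < z b.
Proof.
  unfold I_map; intros Hf b Hb.
  destruct (crossing z (Z.min f (z f)) (Z.max f (z f))) eqn:E.
  - destruct (z_no_fixpoint f); exact Hf.
  - destruct (Z_lt_le_dec b (z b)) as [Hlt | Hle]; [exact Hlt |].
    assert (crossing z (Z.min f (z f)) (Z.max f (z f)) = true).
    { apply crossing_spec; exists b; pose proof (z_no_fixpoint b); split; lia. }
    congruence.
Qed.

Lemma I_map_fixed_partner f : I_map z f = f -> I_map z (z f) = z f.
Proof.
  unfold I_map; rewrite z_involutive, Z.min_comm, Z.max_comm.
  destruct crossing; [intros Hf; destruct (z_no_fixpoint f) |]; auto.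
Qed.

Lemma noncrossing_arc_interior p q : z p = q -> p < q ->
  (forall b, p < b < q -> b < z b) -> forall c, p < c < q -> I_map z c <> c.
Proof.
  intros Hpq Hlt Hnc c Hc Hfix.
  assert (Hqp : z q = p) by (rewrite <- Hpq; apply z_involutive).
  pose proof (Hnc c Hc) as Hup.
  destruct (Z.lt_total (z c) q) as [Hin | [Heq | Hout]].
  - pose proof (Hnc (z c) ltac:(lia)) as Hback; rewrite z_involutive in Hback; lia.
  - assert (c = p) by (rewrite <- (z_involutive c), Heq; exact Hqp).
    lia.
  - assert (Hcross : crossing z (Z.min c (z c)) (Z.max c (z c)) = true)
      by (apply crossing_spec; exists q; lia).
    unfold I_map in Hfix; rewrite Hcross in Hfix; exact (z_no_fixpoint c Hfix).
Qed.

Lemma I_map_fixed_gap f : I_map z f = f ->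
  forall c, Z.min f (z f) < c < Z.max f (z f) -> I_map z c <> c.
Proof.
  intros Hf; apply noncrossing_arc_interior.
  - destruct (Z.le_gt_cases f (z f)).
    + rewrite Z.min_l, Z.max_r by lia; reflexivity.
    + rewrite Z.min_r, Z.max_l by lia; apply z_involutive.
  - pose proof (z_no_fixpoint f); lia.
  - exact (I_map_fixed_noncrossing f Hf).
Qed.

End Noncrossing.

Section Enumeration.

Variables (y phi : Z -> Z) (m : Z).
Hypothesis phi_mono : forall i j, i < j -> phi i < phi j.

Lemma phi_lt_iff i j : phi i < phi j <-> i < j.
Proof.
  split; [| apply phi_mono].
  intros H; destruct (Z.lt_total i j) as [| [-> | Hji]]; auto.
  - lia.
  - pose proof (phi_mono _ _ Hji); lia.
Qed.

Lemma phi_inj i j : phi i = phi j -> i = j.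
Proof. intros E; pose proof (phi_lt_iff i j); pose proof (phi_lt_iff j i); lia. Qed.

Hypothesis supp_gt : forall i, y i <> i -> m < i.
Hypothesis phi_onto : forall j, y j = j -> exists i, phi i = j.
Hypothesis phi0 : phi 0 = m.

(* Everything up to m is fixed by y, so phi starts as the shift by m. *)
Lemma phi_nonpos j : j <= 0 -> phi j = m + j.
Proof.
  revert j; apply Z.left_induction.
  - intros ? ? ->; reflexivity.
  - rewrite phi0; lia.
  - intros j Hj IH.
    assert (Hfix : y (m + j) = m + j)
      by (destruct (Z.eq_dec (y (m + j)) (m + j)) as [| Hne]; [| apply supp_gt in Hne; lia]; auto).
    destruct (phi_onto _ Hfix) as [k Hk].
    pose proof (phi_mono j (Z.succ j) ltac:(lia)).
    assert (k < Z.succ j) by (apply phi_lt_iff; lia).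
    destruct (Z.eq_dec k j) as [-> | Hkj]; [lia |].
    pose proof (phi_mono k j ltac:(lia)); lia.
Qed.

End Enumeration.

Lemma z_phi_neighbour z phi :
  (forall i, z (z i) = i) -> (forall i, z i <> i) ->
  (forall i j, i < j -> phi i < phi j) ->
  (forall i, I_map z (phi i) = phi i) ->
  (forall j, I_map z j = j -> exists i, phi i = j) ->
  forall i, z (phi i) = phi (i - 1) \/ z (phi i) = phi (i + 1).
Proof.
  intros Hinv Hnofix Hmono Hfix Honto i.
  destruct (Honto _ (I_map_fixed_partner z Hinv Hnofix _ (Hfix i))) as [j Hj].
  assert (Hji : j <> i) by (intros ->; exact (Hnofix _ (eq_sym Hj))).
  assert (Hgap : forall k, Z.min (phi i) (phi j) < phi k < Z.max (phi i) (phi j) -> False).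
  { intros k Hk; rewrite Hj in Hk.
    exact (I_map_fixed_gap z Hinv Hnofix _ (Hfix i) _ Hk (Hfix k)). }
  rewrite <- Hj.
  destruct (Z.lt_total j i) as [Hlt | [| Hgt]]; [| congruence |].
  - destruct (Z.eq_dec j (i - 1)) as [-> | Hne]; [auto |].
    destruct (Hgap (i - 1)); pose proof (Hmono j (i - 1)); pose proof (Hmono (i - 1) i); lia.
  - destruct (Z.eq_dec j (i + 1)) as [-> | Hne]; [auto |].
    destruct (Hgap (i + 1)); pose proof (Hmono i (i + 1)); pose proof (Hmono (i + 1) j); lia.
Qed.

Section NeighbourPairing.

Variables z phi t : Z -> Z.
Hypothesis z_involutive : forall x, z (z x) = x.
Hypothesis phi_inj : forall i j, phi i = phi j -> i = j.
Hypothesis t_involutive : forall i, t (t i) = i.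
Hypothesis t_neighbour : forall i, t i = i - 1 \/ t i = i + 1.
Hypothesis z_phi_neighbour : forall i, z (phi i) = phi (i - 1) \/ z (phi i) = phi (i + 1).

Lemma pairing_spread i k : z (phi i) = phi (t i) -> k = i - 1 \/ k = i + 1 ->
  z (phi k) = phi (t k).
Proof.
  intros Hi Hk.
  destruct (Z.eq_dec (t i) k) as [Htik | Htik].
  - rewrite <- Htik at 1; rewrite <- Hi, z_involutive, <- Htik, t_involutive; reflexivity.
  - assert (Htki : t k <> i) by (intros E; apply Htik; rewrite <- E; apply t_involutive).
    (* k has neighbours i and 2k - i; z cannot pair k with i, since i is paired with t i. *)
    assert (Hzk : z (phi k) <> phi i).
    { intros E; apply Htik, phi_inj; rewrite <- Hi, <- E, z_involutive; reflexivity. }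
    destruct (z_phi_neighbour k) as [E | E], (t_neighbour k) as [T | T];
      rewrite E, T; f_equal; try lia; exfalso; apply Hzk; rewrite E; f_equal; lia.
Qed.

Lemma pairing_unique j0 : z (phi j0) = phi (t j0) -> forall i, z (phi i) = phi (t i).
Proof.
  intros H0 i; replace i with (j0 + (i - j0)) by ring.
  induction (i - j0) as [| d IH | d IH] using Z.peano_ind.
  - rewrite Z.add_0_r; exact H0.
  - apply (pairing_spread _ _ IH); lia.
  - apply (pairing_spread _ _ IH); lia.
Qed.

End NeighbourPairing.

Lemma z_phi_Theta z m phi : in_F_Z z -> F_data (I_map z) m phi ->
  forall i, z (phi i) = phi (Theta i).
Proof.
  intros HF (Hm & Hsupp & Hmono & Hfix & Honto & H0).
  pose proof (F_Z_involutive z HF) as Hinv.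
  destruct (F_Z_eventually_Theta z HF) as [N HN].
  set (j0 := - (Z.abs m + Z.abs N + 2)).
  assert (Hbase : z (phi j0) = phi (Theta j0)).
  { assert (j0 < 0) by (unfold j0; lia).
    assert (Theta j0 <= 0) by (destruct (Theta_neighbour j0); lia).
    rewrite !(phi_nonpos _ _ _ Hmono Hsupp Honto H0) by lia.
    rewrite HN by (unfold j0; lia); apply Theta_add_even, Hm. }
  apply (pairing_unique z phi Theta Hinv (phi_inj _ Hmono) Theta_involutive Theta_neighbour
           (z_phi_neighbour z phi Hinv (F_Z_no_fixpoint z HF) Hmono Hfix Honto) j0 Hbase).
Qed.

Theorem proposition3p7 :
  forall z : Z -> Z, in_F_Z z ->
  forall (m : Z) (phi : Z -> Z), F_data (I_map z) m phi ->
    F_spec (I_map z) phi z /\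
    (forall z' : Z -> Z, F_spec (I_map z) phi z' -> z' = z).
Proof.
  intros z HF m phi HD.
  pose proof (z_phi_Theta z m phi HF HD) as Hconj.
  split.
  - split; [exact HF | split; [| exact Hconj]].
    intros i Hi; symmetry; apply I_map_moved, Hi.
  - intros z' (_ & Hsupp' & Hconj'); apply functional_extensionality; intros x.
    destruct (Z.eq_dec (I_map z x) x) as [Hfix | Hmoved].
    + destruct HD as (_ & _ & _ & _ & Honto & _).
      destruct (Honto _ Hfix) as [j <-]; rewrite Hconj', Hconj; reflexivity.
    + rewrite Hsupp', I_map_moved; auto.
Qed.
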